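(* Let $G$ and $H$ be Left dead-ends with $G\neq 0$ and $H\neq 0$. Then no Left dead-end $K$ with $K=G+H$ has $0$ as a Right option.
   Context: Games are finite partizan games; $o(G)$ is the misère outcome class (ordered $\mathscr{L}>\mathscr{N}>\mathscr{R}$, $\mathscr{L}>\mathscr{P}>\mathscr{R}$). A universe is a set of games closed under options, disjunctive sums, conjugates, and forming $\{\mathscr{G}^L\mid\mathscr{G}^R\}$ from nonempty finite subsets of it; $G\geq_\mathcal{U}H$ means $o(G+X)\geq o(H+X)$ for all $X\in\mathcal{U}$. A Left dead-end is a game all of whose subpositions have no Left option. For Left dead-ends, $G\geq H$ means $G\geq_\mathcal{U}H$ for every universe $\mathcal{U}$, and $G=H$ means $G\geq H$ and $H\geq G$. *)

From Stdlib Require Import List.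
Import ListNotations.

Inductive game : Type := Game : list game -> list game -> game.

Definition leftOpts (G : game) : list game := let (l, _) := G in l.
Definition rightOpts (G : game) : list game := let (_, r) := G in r.

Definition zero : game := Game [] [].

(* Disjunctive sum: G + H = {G^L + H, G + H^L | G^R + H, G + H^R}. *)
Fixpoint gadd (G H : game) {struct G} : game :=
  let fix addG (H : game) : game :=
    match G, H with
    | Game gl gr, Game hl hr =>
        Game (map (fun g => gadd g H) gl ++ map addG hl)
             (map (fun g => gadd g H) gr ++ map addG hr)
    end in
  addG H.

Fixpoint gconj (G : game) : game :=
  match G with Game l r => Game (map gconj r) (map gconj l) end.

(* Misere play: a player with no move available wins. *)
(* leftFirst G : Left wins G moving first; leftSecond G : Left wins G when
   Right moves first. *)
Fixpoint leftFirst (G : game) : bool :=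
  match G with
  | Game l r =>
      match l with
      | [] => true
      | _ => existsb (fun g =>
               match g with
               | Game _ r' =>
                   match r' with
                   | [] => false
                   | _ => forallb leftFirst r'
                   end
               end) l
      end
  end.

Definition leftSecond (G : game) : bool :=
  match rightOpts G with
  | [] => false
  | r => forallb leftFirst r
  end.

Inductive outcome : Type := oL | oN | oP | oR.

Definition o (G : game) : outcome :=
  match leftFirst G, leftSecond G with
  | true, true => oL
  | true, false => oN
  | false, true => oP
  | false, false => oR
  end.

Definition outcome_ge (a b : outcome) : Prop :=
  match a, b with
  | oL, _ => True
  | oN, oN | oN, oR => True
  | oP, oP | oP, oR => True
  | oR, oR => True
  | _, _ => False
  end.

Inductive subpos : game -> game -> Prop :=
  | subpos_refl G : subpos G G
  | subpos_left S G g : In g (leftOpts G) -> subpos S g -> subpos S G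
  | subpos_right S G g : In g (rightOpts G) -> subpos S g -> subpos S G.

Definition left_dead_end (G : game) : Prop :=
  forall S, subpos S G -> leftOpts S = [].

Definition is_universe (U : game -> Prop) : Prop :=
  (forall G g, U G -> In g (leftOpts G) \/ In g (rightOpts G) -> U g) /\
  (forall G H, U G -> U H -> U (gadd G H)) /\
  (forall G, U G -> U (gconj G)) /\
  (forall L R, L <> [] -> R <> [] ->
     (forall x, In x L -> U x) -> (forall x, In x R -> U x) -> U (Game L R)).

Definition ge_in (U : game -> Prop) (G H : game) : Prop :=
  forall X, U X -> outcome_ge (o (gadd G X)) (o (gadd H X)).

Definition gge (G H : game) : Prop :=
  forall U, is_universe U -> ge_in U G H.

Definition geq (G H : game) : Prop := gge G H /\ gge H G.

(* Test against X = 1 = {0 | }.  For a Left dead-end X, Left moving first in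
   X + 1 must play to X + 0, so she wins iff X has a Right option; Right moving
   first in X + 1 wins iff X or one of its Right options is the form 0, since
   from 0 + 1 Left is forced to move to 0 and then Right has no move.  So K + 1 is
   an N-position, while G + H + 1 is an L- or P-position: G and H each have a
   Right option (a Left dead-end without one is 0), hence so does every Right
   option of G + H.  But N is not >= L or P. *)

From Stdlib Require Import List Bool.
Import ListNotations.

Definition one : game := Game [zero] [].

Definition has_right (G : game) : bool :=
  match rightOpts G with [] => false | _ => true end.

Lemma leftOpts_gadd G H :
  leftOpts (gadd G H) =
  map (fun g => gadd g H) (leftOpts G) ++ map (gadd G) (leftOpts H).
Proof. destruct G, H; reflexivity. Qed.

Lemma rightOpts_gadd G H :
  rightOpts (gadd G H) =
  map (fun g => gadd g H) (rightOpts G) ++ map (gadd G) (rightOpts H).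
Proof. destruct G, H; reflexivity. Qed.

Lemma leftOpts_gadd_nil G H :
  leftOpts G = [] -> leftOpts H = [] -> leftOpts (gadd G H) = [].
Proof. intros HG HH; rewrite leftOpts_gadd, HG, HH; reflexivity. Qed.

Lemma has_right_gadd G H : has_right (gadd G H) = has_right G || has_right H.
Proof.
  unfold has_right; rewrite rightOpts_gadd.
  destruct (rightOpts G), (rightOpts H); reflexivity.
Qed.

Lemma in_rightOpts_gadd G H x :
  In x (rightOpts (gadd G H)) ->
  (exists g, In g (rightOpts G) /\ x = gadd g H) \/
  (exists h, In h (rightOpts H) /\ x = gadd G h).
Proof.
  rewrite rightOpts_gadd; intros Hx.
  apply in_app_or in Hx as [Hx | Hx]; apply in_map_iff in Hx as [y [<- Hy]];
    eauto.
Qed.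

Lemma in_leftOpts_gadd G H x :
  In x (leftOpts (gadd G H)) ->
  (exists g, In g (leftOpts G) /\ x = gadd g H) \/
  (exists h, In h (leftOpts H) /\ x = gadd G h).
Proof.
  rewrite leftOpts_gadd; intros Hx.
  apply in_app_or in Hx as [Hx | Hx]; apply in_map_iff in Hx as [y [<- Hy]];
    eauto.
Qed.

Lemma subpos_gadd S G H :
  subpos S (gadd G H) ->
  exists G' H', subpos G' G /\ subpos H' H /\ S = gadd G' H'.
Proof.
  intros HS; remember (gadd G H) as X eqn:EX; revert G H EX.
  induction HS as [X | S X g Hg HS IH | S X g Hg HS IH]; intros G H ->.
  - exists G, H; repeat split; constructor.
  - destruct (in_leftOpts_gadd _ _ _ Hg) as [[g' [Hg' ->]] | [h' [Hh' ->]]];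
      destruct (IH _ _ eq_refl) as [G' [H' [HG' [HH' ->]]]];
      exists G', H'; repeat split; eauto using subpos_left.
  - destruct (in_rightOpts_gadd _ _ _ Hg) as [[g' [Hg' ->]] | [h' [Hh' ->]]];
      destruct (IH _ _ eq_refl) as [G' [H' [HG' [HH' ->]]]];
      exists G', H'; repeat split; eauto using subpos_right.
Qed.

Lemma left_dead_end_gadd G H :
  left_dead_end G -> left_dead_end H -> left_dead_end (gadd G H).
Proof.
  intros HG HH S HS.
  destruct (subpos_gadd _ _ _ HS) as [G' [H' [HG' [HH' ->]]]].
  apply leftOpts_gadd_nil; auto.
Qed.

Lemma left_dead_end_leftOpts G : left_dead_end G -> leftOpts G = [].
Proof. intros HG; apply HG; constructor. Qed.

Lemma left_dead_end_rightOpts G g :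
  left_dead_end G -> In g (rightOpts G) -> left_dead_end g.
Proof. intros HG Hg S HS; apply HG; eapply subpos_right; eauto. Qed.

Lemma leftFirst_leftOpts_nil G : leftOpts G = [] -> leftFirst G = true.
Proof. destruct G as [gl gr]; simpl; intros ->; reflexivity. Qed.

Lemma leftSecond_eq_has_right G :
  (forall x, In x (rightOpts G) -> leftOpts x = []) ->
  leftSecond G = has_right G.
Proof.
  unfold leftSecond, has_right; intros Hx.
  destruct (rightOpts G) as [|g gs] eqn:E; [reflexivity|].
  rewrite <- E in Hx |- *.
  apply forallb_forall; intros x Hin; apply leftFirst_leftOpts_nil; auto.
Qed.

Lemma leftFirst_gadd_one X :
  leftOpts X = [] -> leftFirst (gadd X one) = leftSecond (gadd X zero).
Proof.
  destruct X as [xl xr]; simpl; intros ->; unfold leftSecond; simpl.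
  destruct (map _ xr); simpl; rewrite ?orb_false_r; reflexivity.
Qed.

Lemma leftFirst_gadd_one_dead_end X :
  left_dead_end X -> leftFirst (gadd X one) = has_right X.
Proof.
  intros HX.
  rewrite leftFirst_gadd_one by (apply left_dead_end_leftOpts; exact HX).
  rewrite leftSecond_eq_has_right, has_right_gadd, orb_false_r; [reflexivity|].
  intros x Hx; destruct (in_rightOpts_gadd _ _ _ Hx) as [[g [Hg ->]] | [h [[] _]]].
  apply leftOpts_gadd_nil; [|reflexivity].
  exact (left_dead_end_leftOpts _ (left_dead_end_rightOpts _ _ HX Hg)).
Qed.

Lemma leftSecond_gadd_one_dead_end X :
  left_dead_end X ->
  leftSecond (gadd X one) = has_right X && forallb has_right (rightOpts X).
Proof.
  intros HX; unfold leftSecond, has_right at 1.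
  rewrite rightOpts_gadd; simpl; rewrite app_nil_r.
  assert (Hopts : forall x, In x (rightOpts X) -> left_dead_end x)
    by (intros x; apply left_dead_end_rightOpts; exact HX).
  assert (Hall : forallb leftFirst (map (fun x => gadd x one) (rightOpts X))
                 = forallb has_right (rightOpts X)).
  { induction (rightOpts X) as [|x r IH]; [reflexivity|]; simpl in *.
    rewrite leftFirst_gadd_one_dead_end, IH; auto. }
  destruct (rightOpts X); [reflexivity|]; exact Hall.
Qed.

Lemma forallb_has_right_rightOpts_gadd G H :
  has_right G = true -> has_right H = true ->
  forallb has_right (rightOpts (gadd G H)) = true.
Proof.
  intros HG HH; apply forallb_forall; intros x Hx.
  destruct (in_rightOpts_gadd _ _ _ Hx) as [[g [_ ->]] | [h [_ ->]]];
    rewrite has_right_gadd, ?HG, ?HH, ?orb_true_r; reflexivity.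
Qed.

Lemma o_gadd_one_zero_right K :
  left_dead_end K -> In zero (rightOpts K) -> o (gadd K one) = oN.
Proof.
  intros HK Hz.
  assert (HrK : has_right K = true)
    by (unfold has_right; destruct (rightOpts K); [destruct Hz | reflexivity]).
  assert (Hall : forallb has_right (rightOpts K) = false).
  { apply not_true_iff_false; intros Hall.
    discriminate (proj1 (forallb_forall _ _) Hall _ Hz). }
  unfold o; rewrite leftFirst_gadd_one_dead_end, leftSecond_gadd_one_dead_end,
    HrK, Hall by exact HK; reflexivity.
Qed.

Lemma leftSecond_gadd_gadd_one G H :
  left_dead_end G -> left_dead_end H ->
  has_right G = true -> has_right H = true ->
  leftSecond (gadd (gadd G H) one) = true.
Proof.
  intros HG HH HrG HrH.
  rewrite leftSecond_gadd_one_dead_end by (apply left_dead_end_gadd; assumption).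
  rewrite has_right_gadd, HrG, forallb_has_right_rightOpts_gadd; auto.
Qed.

Lemma leftSecond_of_outcome_le_N X : outcome_ge oN (o X) -> leftSecond X = false.
Proof. unfold o; destruct (leftFirst X), (leftSecond X); simpl; tauto. Qed.

Lemma geq_refl G : geq G G.
Proof. split; intros U _ X _; destruct (o (gadd G X)); exact I. Qed.

Lemma is_universe_all : is_universe (fun _ => True).
Proof. repeat split; auto. Qed.

Lemma has_right_not_geq_zero G :
  left_dead_end G -> ~ geq G zero -> has_right G = true.
Proof.
  intros HG Hne; destruct G as [gl gr].
  pose proof (left_dead_end_leftOpts _ HG) as Hgl; simpl in Hgl; subst gl.
  destruct gr as [|g gs]; [|reflexivity].
  exfalso; exact (Hne (geq_refl zero)).
Qed.

Theorem mainTheorem14 :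
  forall G H : game,
    left_dead_end G -> left_dead_end H ->
    ~ geq G zero -> ~ geq H zero ->
    forall K : game, left_dead_end K -> geq K (gadd G H) ->
      ~ In zero (rightOpts K).
Proof.
  intros G H HG HH HnG HnH K HK [HKge _] Hz.
  specialize (HKge _ is_universe_all one I).
  rewrite o_gadd_one_zero_right in HKge by assumption.
  apply leftSecond_of_outcome_le_N in HKge.
  rewrite leftSecond_gadd_gadd_one in HKge;
    auto using has_right_not_geq_zero; discriminate.
Qed.
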